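(* If $G$ and $H$ are finite simple graphs without isolated vertices that are both total Roman graphs, then $$\gamma_{tR}(G\times H)\le \frac{\gamma_{tR}(G)\gamma_{tR}(H)}{2}.$$
   Context: $\gamma_t(G)$ is the minimum size of a set $D\subseteq V(G)$ such that every vertex of $G$ has a neighbor in $D$. A total Roman dominating function on $G$ is a map $f:V(G)\to\{0,1,2\}$ such that every vertex with label 0 has a neighbor with label 2 and the subgraph induced by vertices with positive labels has no isolated vertices; $\gamma_{tR}(G)$ is the minimum of $\sum_v f(v)$ over such $f$. $G$ is a total Roman graph if $\gamma_{tR}(G)=2\gamma_t(G)$. The direct product $G\times H$ has vertex set $V(G)\times V(H)$, with $(g,h)(g',h')$ an edge iff $gg'\in E(G)$ and $hh'\in E(H)$. *)

From mathcomp Require Import all_boot.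
Set Implicit Arguments. Unset Strict Implicit. Unset Printing Implicit Defensive.

Definition simple_graph (V : finType) (e : rel V) : Prop :=
  symmetric e /\ irreflexive e.

Definition no_isolated (V : finType) (e : rel V) : Prop :=
  forall v : V, exists u : V, e v u.

Definition total_dominating (V : finType) (e : rel V) (D : {set V}) : bool :=
  [forall v, exists u, (u \in D) && e v u].

(* gamma_t: minimum size of a total dominating set (default #|V| when none
   exists, which cannot happen without isolated vertices). *)
Definition gamma_t (V : finType) (e : rel V) : nat :=
  \big[minn/#|V|]_(D : {set V} | total_dominating e D) #|D|.

Definition total_roman (V : finType) (e : rel V) (f : {ffun V -> 'I_3}) : bool :=
  [forall v, (nat_of_ord (f v) == 0) ==> [exists u, e v u && (nat_of_ord (f u) == 2)]]
  && [forall v, (0 < f v) ==> [exists u, e v u && (0 < f u)]].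

Definition weight (V : finType) (f : {ffun V -> 'I_3}) : nat :=
  \sum_(v : V) nat_of_ord (f v).

(* gamma_tR: minimum weight of a TRDF (default 2 #|V|, the weight of the
   constant-2 function, which is a TRDF without isolated vertices). *)
Definition gamma_tR (V : finType) (e : rel V) : nat :=
  \big[minn/(2 * #|V|)%N]_(f : {ffun V -> 'I_3} | total_roman e f) weight f.

Definition total_roman_graph (V : finType) (e : rel V) : Prop :=
  gamma_tR e = (2 * gamma_t e)%N.

Definition direct_prod (V W : finType) (e1 : rel V) (e2 : rel W) : rel (V * W) :=
  fun x y => e1 x.1 y.1 && e2 x.2 y.2.

From mathcomp Require Import all_boot order.
Import Order.TTheory.

(* The product of total dominating sets of G and H totally dominates G x H,
   and twice its indicator is a total Roman dominating function; hence
   gamma_tR(G x H) <= 2 gamma_t(G) gamma_t(H), which for total Roman graphs is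
   gamma_tR(G) gamma_tR(H) / 2. *)

Section Domination.

Variables (V : finType) (e : rel V).

Lemma total_dominating_setT : no_isolated e -> total_dominating e [set: V].
Proof.
move=> noiso; apply/forallP => v; have [u evu] := noiso v.
by apply/existsP; exists u; rewrite in_setT evu.
Qed.

Lemma gamma_t_min_total_dominating : no_isolated e ->
  exists2 D, total_dominating e D & #|D| = gamma_t e.
Proof.
move=> /total_dominating_setT domT.
have := @bigmin_eq_arg _ nat _ #|V| setT (total_dominating e) (fun D => #|D|).
rewrite -/(gamma_t e) => /(_ domT (fun D _ => max_card D)) ->.
by case: arg_minP => // D domD _; exists D.
Qed.

Definition twice_indicator (D : {set V}) : {ffun V -> 'I_3} :=
  [ffun v => if v \in D then ord_max else ord0].

Lemma weight_twice_indicator (D : {set V}) : weight (twice_indicator D) = 2 * #|D|.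
Proof.
rewrite /weight (eq_bigr (fun v => if v \in D then 2 else 0)); last first.
  by move=> v _; rewrite ffunE; case: (v \in D).
by rewrite -big_mkcond /= sum_nat_const mulnC.
Qed.

Lemma total_roman_twice_indicator (D : {set V}) :
  total_dominating e D -> total_roman e (twice_indicator D).
Proof.
move=> domD; have neighbour_in_D v : exists2 u, e v u & u \in D.
  by have /existsP[u /andP[uD evu]] := forallP domD v; exists u.
apply/andP; split; apply/forallP => v; apply/implyP => _;
  have [u evu uD] := neighbour_in_D v;
  by apply/existsP; exists u; rewrite evu ffunE uD.
Qed.

Lemma gamma_tR_le_double_card (D : {set V}) :
  total_dominating e D -> gamma_tR e <= 2 * #|D|.
Proof.
move=> /total_roman_twice_indicator trD; rewrite -weight_twice_indicator.
exact: (@bigmin_le_cond _ nat _ (2 * #|V|) _ (total_roman e)).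
Qed.

End Domination.

Lemma total_dominating_setX (V W : finType) (eG : rel V) (eH : rel W)
    (D : {set V}) (E : {set W}) :
  total_dominating eG D -> total_dominating eH E ->
  total_dominating (direct_prod eG eH) (setX D E).
Proof.
move=> /forallP domD /forallP domE; apply/forallP => -[g h].
have /existsP[u /andP[uD egu]] := domD g.
have /existsP[w /andP[wE ehw]] := domE h.
by apply/existsP; exists (u, w); rewrite in_setX uD wE /direct_prod /= egu ehw.
Qed.

Lemma gamma_tR_direct_prod_le (V W : finType) (eG : rel V) (eH : rel W) :
  no_isolated eG -> no_isolated eH ->
  gamma_tR (direct_prod eG eH) <= 2 * (gamma_t eG * gamma_t eH).
Proof.
move=> /gamma_t_min_total_dominating[D domD <-].
move=> /gamma_t_min_total_dominating[E domE <-].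
by rewrite -cardsX; apply/gamma_tR_le_double_card/total_dominating_setX.
Qed.

Theorem corollary2p6 (V W : finType) (eG : rel V) (eH : rel W) :
  simple_graph eG -> simple_graph eH ->
  no_isolated eG -> no_isolated eH ->
  total_roman_graph eG -> total_roman_graph eH ->
  (2 * gamma_tR (direct_prod eG eH) <= gamma_tR eG * gamma_tR eH)%N.
Proof.
move=> _ _ noisoG noisoH -> ->.
rewrite mulnACA -mulnA leq_mul2l /=.
exact: gamma_tR_direct_prod_le.
Qed.
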